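(* Let $n\ge1$, $K=\mathbb{R}^n_+$, and $\bar x\in K\cap\mathbb{Z}^n$. For every $k\in\{1,\dots,n\}$, every point $x\in Q(\bar x)$ satisfies the $k$-th lex-cut associated with $\bar x$, namely $$\sum_{i=1}^k d^k_i x_i\ \ge\ \sum_{i=1}^k d^k_i\bar x_i .$$
   Context: Lexicographic order: for $x,y\in\mathbb{R}^n$, $x\prec y$ iff $x\ne y$ and $x_i<y_i$ for the smallest index $i$ with $x_i\ne y_i$; $\succeq$ has the obvious meaning. $Q(\bar x):=\operatorname{conv}\{x\in K\cap\mathbb{Z}^n: x\succeq\bar x\}$. For $k\in\{1,\dots,n\}$ and $i\in\{1,\dots,k\}$: $d^k_k=1$; $d^k_{k-1}=\bar x_k$ (if $k\ge2$); and $d^k_i=\bar x_k\prod_{j=i+1}^{k-1}(\bar x_j+1)$ for $i\le k-2$. *)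

From HB Require Import structures.
From mathcomp Require Import all_boot all_order all_algebra.
From mathcomp Require Import reals.
Set Implicit Arguments. Unset Strict Implicit. Unset Printing Implicit Defensive.
Import Order.TTheory GRing.Theory Num.Theory.
Local Open Scope ring_scope.

(* Coordinates are 0-based: x_i (paper, 1-based) is x ord0 i' with i' = i-1. *)

Definition in_K (R : realType) (n : nat) (x : 'rV[R]_n) : Prop :=
  forall i : 'I_n, 0 <= x ord0 i.

Definition integral_pt (R : realType) (n : nat) (x : 'rV[R]_n) : Prop :=
  forall i : 'I_n, x ord0 i \is a Num.int.

Definition lex_ge (R : realType) (n : nat) (x y : 'rV[R]_n) : Prop :=
  x = y \/ exists i : 'I_n,
    (forall j : 'I_n, (j < i)%N -> x ord0 j = y ord0 j) /\ y ord0 i < x ord0 i.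

Definition conv (R : realType) (n : nat) (S : 'rV[R]_n -> Prop) (x : 'rV[R]_n) : Prop :=
  exists (m : nat) (lam : 'I_m -> R) (p : 'I_m -> 'rV[R]_n),
    (forall j, 0 <= lam j) /\ \sum_(j < m) lam j = 1 /\
    (forall j, S (p j)) /\ x = \sum_(j < m) lam j *: p j.

Definition Q (R : realType) (n : nat) (xbar : 'rV[R]_n) : 'rV[R]_n -> Prop :=
  conv (fun x => [/\ in_K x, integral_pt x & lex_ge x xbar]).

Definition dcoef (R : realType) (n : nat) (xbar : 'rV[R]_n) (k i : 'I_n) : R :=
  if i == k :> nat then 1
  else if i.+1 == k :> nat then xbar ord0 k
  else xbar ord0 k * \prod_(j : 'I_n | (i < j)%N && (j < k)%N) (xbar ord0 j + 1).

From HB Require Import structures.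
From mathcomp Require Import all_boot all_order all_algebra.
From mathcomp Require Import reals.
From mathcomp Require Import zify lra.
Set Implicit Arguments. Unset Strict Implicit. Unset Printing Implicit Defensive.
Import Order.TTheory GRing.Theory Num.Theory.
Local Open Scope ring_scope.

(* For i < k the cut coefficients satisfy d_i = sum_(i < j <= k) d_j xbar_j, a
   telescoping expansion of prod_(i < j < k) (xbar_j + 1).  Let y >=lex xbar be an
   integral point of K whose first difference with xbar is at i <= k.  Integrality gives
   y_i - xbar_i >= 1, so the gain d_i (y_i - xbar_i) >= d_i makes up for the largest
   possible loss sum_(j > i) d_j xbar_j in the later coordinates, where y_j >= 0; if
   i > k both sides of the cut agree.  The cut is linear, hence holds on the convex
   hull Q(xbar). *)

Lemma prod_add1_telescope (R : comPzRingType) (a : nat -> R) (m p : nat) :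
  \prod_(m <= i < p) (a i + 1) =
  1 + \sum_(m <= j < p) a j * \prod_(j.+1 <= i < p) (a i + 1).
Proof.
move e: (p - m)%N => d; elim: d m e => [|d IH] m e.
  by rewrite big_geq 1?big_geq ?addr0 //; lia.
have lt_mp : (m < p)%N by lia.
rewrite big_ltn // [in RHS]big_ltn // IH; last lia.
by rewrite mulrDl mul1r addrCA addrA.
Qed.

Lemma big_ord_interval (R : Type) (idx : R) (op : Monoid.law idx) (n : nat)
    (F : 'I_n.+1 -> R) (m p : nat) :
  (p <= n.+1)%N ->
  \big[op/idx]_(j : 'I_n.+1 | (m <= j < p)%N) F j = \big[op/idx]_(m <= j < p) F (inord j).
Proof.
move=> le_pn; rewrite big_geq_mkord.
rewrite (big_ord_widen_cond _ _ (fun j => F (inord j)) le_pn).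
by apply: eq_big => [j|j _]; rewrite ?inord_val // andbC.
Qed.

Lemma int_num_lt_subr_ge1 (R : archiNumDomainType) (x y : R) :
  x \is a Num.int -> y \is a Num.int -> x < y -> 1 <= y - x.
Proof.
move=> /intrP[a ->] /intrP[b ->]; rewrite ltr_int -intrB => lt_ab.
by rewrite -[1](mulr1z 1) ler_int; lia.
Qed.

Lemma conv_scalar_ge (R : realType) (n : nat) (f : {scalar 'rV[R]_n})
    (S : 'rV[R]_n -> Prop) (b : R) (x : 'rV[R]_n) :
  (forall y, S y -> b <= f y) -> conv S x -> b <= f x.
Proof.
move=> Sb [m [lam [p [lam_ge0 [lam1 [Sp ->]]]]]].
rewrite linear_sum -[b]mul1r -lam1 mulr_suml; apply: ler_sum => j _.
by rewrite linearZ; apply: ler_wpM2l (Sb _ (Sp j)).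
Qed.

Section PrefixForm.
Variables (R : realType) (n : nat) (c : 'I_n -> R) (k : nat).

Definition prefix_form (v : 'rV[R]_n) : R := \sum_(i : 'I_n | (i <= k)%N) c i * v ord0 i.

Fact prefix_form_is_linear : linear_for *%R prefix_form.
Proof.
move=> a u v; rewrite /prefix_form mulr_sumr -big_split /=.
by apply: eq_bigr => i _; rewrite !mxE mulrDr mulrCA.
Qed.

HB.instance Definition _ :=
  GRing.isLinear.Build R 'rV[R]_n R *%R prefix_form prefix_form_is_linear.

Hypothesis c_ge0 : forall j : 'I_n, (j <= k)%N -> 0 <= c j.

Lemma prefix_form_le_lex (xbar y : 'rV[R]_n) :
  (forall i : 'I_n, (i <= k)%N ->
     \sum_(j : 'I_n | (i < j <= k)%N) c j * xbar ord0 j <= c i) ->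
  integral_pt xbar -> in_K y -> integral_pt y -> lex_ge y xbar ->
  prefix_form xbar <= prefix_form y.
Proof.
move=> c_dom xZ yK yZ [-> // | [i [y_pre lt_i]]].
rewrite -subr_ge0 /prefix_form -sumrB.
have [le_ik | lt_ki] := leqP i k; last first.
  by rewrite big1 // => j le_jk; rewrite y_pre ?subrr //; lia.
rewrite (bigD1 i) //= (bigID (fun j : 'I_n => (j < i)%N)) /=.
rewrite big1 ?add0r; last first.
  by move=> j /andP[_ lt_ji]; rewrite y_pre ?subrr.
rewrite (eq_bigl (fun j : 'I_n => (i < j <= k)%N)); last first.
  move=> j; rewrite -(inj_eq val_inj) /=.
  by case: (ltngtP i j); rewrite ?andbT ?andbF.
have gain : c i <= c i * y ord0 i - c i * xbar ord0 i.
  by rewrite -mulrBr ler_peMr ?c_ge0 ?int_num_lt_subr_ge1.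
have loss : - \sum_(j : 'I_n | (i < j <= k)%N) c j * xbar ord0 j <=
            \sum_(j : 'I_n | (i < j <= k)%N) (c j * y ord0 j - c j * xbar ord0 j).
  rewrite -sumrN; apply: ler_sum => j /andP[_ le_jk].
  by rewrite lerDr mulr_ge0 ?c_ge0.
have := c_dom i le_ik; lra.
Qed.

End PrefixForm.

Lemma dcoef_ge0 (R : realType) (n : nat) (xbar : 'rV[R]_n) (k i : 'I_n) :
  in_K xbar -> 0 <= dcoef xbar k i.
Proof.
move=> xK; rewrite /dcoef; case: ifP => _ //; case: ifP => _ //.
by rewrite mulr_ge0 // prodr_ge0 // => j _; rewrite addr_ge0.
Qed.

Section LexCutCoefficients.
Variables (R : realType) (n : nat) (xbar : 'rV[R]_n.+1) (k : 'I_n.+1).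

Lemma dcoef_lt (i : 'I_n.+1) : (i < k)%N ->
  dcoef xbar k i = xbar ord0 k * \prod_(i.+1 <= j < k) (xbar ord0 (inord j) + 1).
Proof.
move=> lt_ik; rewrite /dcoef ltn_eqF //.
rewrite (@big_ord_interval _ _ _ _ (fun j => xbar ord0 j + 1)).
  by case: eqP => // ->; rewrite big_geq ?mulr1.
exact: ltnW.
Qed.

Lemma dcoef_telescope (i : 'I_n.+1) : (i < k)%N ->
  dcoef xbar k i = \sum_(j : 'I_n.+1 | (i < j <= k)%N) dcoef xbar k j * xbar ord0 j.
Proof.
move=> lt_ik.
rewrite (eq_bigl (fun j : 'I_n.+1 => (i < j < k.+1)%N)) // big_ord_interval //.
rewrite big_nat_recr //= inord_val [dcoef xbar k k]/dcoef eqxx mul1r.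
rewrite dcoef_lt // prod_add1_telescope mulrDr mulr1 addrC mulr_sumr.
congr (_ + _); apply: eq_big_nat => j /andP[lt_ij lt_jk].
have lt_jn := ltn_trans lt_jk (ltn_ord k).
by rewrite dcoef_lt inordK // mulrCA [RHS]mulrC.
Qed.

Lemma dcoef_ge_tail (i : 'I_n.+1) : in_K xbar -> (i <= k)%N ->
  \sum_(j : 'I_n.+1 | (i < j <= k)%N) dcoef xbar k j * xbar ord0 j <= dcoef xbar k i.
Proof.
move=> xK; rewrite leq_eqVlt => /predU1P[->|lt_ik]; last by rewrite -dcoef_telescope.
by rewrite big_pred0 ?dcoef_ge0 // => j; rewrite ltnNge andNb.
Qed.

End LexCutCoefficients.

Theorem lemma2 (R : realType) (n : nat) (hn : (1 <= n)%N) (xbar : 'rV[R]_n)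
  (hK : in_K xbar) (hZ : integral_pt xbar) (k : 'I_n) (x : 'rV[R]_n)
  (hx : Q xbar x) :
  \sum_(i : 'I_n | (i <= k)%N) dcoef xbar k i * x ord0 i >=
  \sum_(i : 'I_n | (i <= k)%N) dcoef xbar k i * xbar ord0 i.
Proof.
case: n hn xbar hK hZ k x hx => // n _ xbar hK hZ k x hx.
have cut_ge y : [/\ in_K y, integral_pt y & lex_ge y xbar] ->
    prefix_form (dcoef xbar k) k xbar <= prefix_form (dcoef xbar k) k y.
  case=> yK yZ y_ge; apply: prefix_form_le_lex => // [j _ | i]; first exact: dcoef_ge0.
  exact: dcoef_ge_tail.
exact: conv_scalar_ge cut_ge hx.
Qed.
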